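(* Let $X$ be a Banach lattice with order continuous norm, let $(S_\lambda)_{\lambda\in\Lambda}$ be a family of convex monotone semigroups on $X$, and let $T$ be a semigroup which is an upper bound of $(S_\lambda)_{\lambda\in\Lambda}$. Then the semigroup envelope $S$ of $(S_\lambda)_{\lambda\in\Lambda}$ exists and is given by $S(t)x=\sup_{\pi\in P_t}J_\pi x$ for all $t\ge0$, $x\in X$. If $T$ is a $C_0$-semigroup and $S_{\lambda_0}$ is a $C_0$-semigroup for some $\lambda_0\in\Lambda$, then $S$ is a $C_0$-semigroup.
   Context: A Banach lattice $X$ has order continuous norm if $\|x_\alpha\|\to 0$ for every net $x_\alpha\downarrow 0$ (then every nonempty subset bounded above has a supremum). An operator $T\colon X\to X$ is convex if $T(\lambda x+(1-\lambda)y)\le\lambda Tx+(1-\lambda)Ty$, monotone if $x\le y\Rightarrow Tx\le Ty$, bounded if $\sup_{\|x\|\le r}\|Tx\|<\infty$ for all $r>0$. A semigroup on $X$ is a family $(S(t))_{t\ge0}$ of bounded operators $X\to X$ with $S(0)=\mathrm{id}$ and $S(t+s)=S(t)S(s)$; it is a $C_0$-semigroup if additionally $S(t)x\to x$ as $t\downarrow0$ for all $x$; convex/monotone if every $S(t)$ is. For semigroups $S,T$ write $S\le T$ if $S(t)x\le T(t)x$ for all $t,x$. $T$ is an upper bound of $(S_\lambda)$ if $T\ge S_\lambda$ for all $\lambda$; the (upper) semigroup envelope is the smallest upper bound. Let $P$ be the set of finite $\pi\subset[0,\infty)$ with $0\in\pi$, $P_t:=\{\pi\in P:\max\pi=t\}$.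 Define $J_hx:=\sup_{\lambda\in\Lambda}S_\lambda(h)x$ for $h>0$ ($J_0=\mathrm{id}$) and for $\pi=\{t_0<\dots<t_m\}$, $t_0=0$, $J_\pi:=J_{t_1-t_0}\cdots J_{t_m-t_{m-1}}$. *)

From HB Require Import structures.
From mathcomp Require Import all_boot all_order all_algebra.
From mathcomp Require Import all_classical all_reals all_analysis.
Set Implicit Arguments. Unset Strict Implicit. Unset Printing Implicit Defensive.
Import Order.TTheory GRing.Theory Num.Theory.
Import numFieldNormedType.Exports.
Local Open Scope classical_set_scope.
Local Open Scope ring_scope.

Section BL.
Context {R : realType} {X : completeNormedModType R} (le : X -> X -> Prop).

Definition is_sup (A : set X) (s : X) : Prop :=
  (forall a, A a -> le a s) /\ (forall u, (forall a, A a -> le a u) -> le s u).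

Definition is_inf (A : set X) (s : X) : Prop :=
  (forall a, A a -> le s a) /\ (forall u, (forall a, A a -> le u a) -> le u s).

Definition lsup (A : set X) : X := xget 0 (is_sup A).

Definition is_abs (x ax : X) : Prop := is_sup [set x; - x] ax.

Definition banach_lattice : Prop :=
  (forall x, le x x) /\
  (forall x y, le x y -> le y x -> x = y) /\
  (forall x y z, le x y -> le y z -> le x z) /\
  (forall x y z, le x y -> le (x + z) (y + z)) /\
  (forall (a : R) x y, 0 <= a -> le x y -> le (a *: x) (a *: y)) /\
  (forall x y, exists s, is_sup [set x; y] s) /\
  (forall x y ax ay, is_abs x ax -> is_abs y ay -> le ax ay -> `|x| <= `|y|).

(* order continuous norm: ||x_a|| -> 0 for every net x_a decreasing to 0 *)
Definition order_continuous : Prop :=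
  forall (I : Type) (D : I -> I -> Prop) (x : I -> X),
    (exists i : I, True) ->
    (forall i, D i i) -> (forall i j k, D i j -> D j k -> D i k) ->
    (forall i j, exists k, D i k /\ D j k) ->
    (forall i j, D i j -> le (x j) (x i)) ->
    is_inf (range x) 0 ->
    forall eps : R, 0 < eps -> exists i0, forall i, D i0 i -> `|x i| < eps.

(* operators and semigroups; time parameter t : R, only t >= 0 matters *)
Definition bounded_op (A : X -> X) : Prop :=
  forall r : R, 0 < r -> exists M : R, forall x, `|x| <= r -> `|A x| <= M.

Definition convex_op (A : X -> X) : Prop :=
  forall (lam : R) x y, 0 <= lam <= 1 ->
    le (A (lam *: x + (1 - lam) *: y)) (lam *: A x + (1 - lam) *: A y).

Definition monotone_op (A : X -> X) : Prop :=
  forall x y, le x y -> le (A x) (A y).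

Definition semigroup (S : R -> X -> X) : Prop :=
  [/\ (forall t, 0 <= t -> bounded_op (S t)),
      (forall x, S 0 x = x) &
      (forall t s x, 0 <= t -> 0 <= s -> S (t + s) x = S t (S s x))].

Definition C0_semigroup (S : R -> X -> X) : Prop :=
  semigroup S /\ forall x, S^~ x @ 0^'+ --> x.

Definition convex_semigroup (S : R -> X -> X) : Prop :=
  semigroup S /\ forall t, 0 <= t -> convex_op (S t).

Definition monotone_semigroup (S : R -> X -> X) : Prop :=
  semigroup S /\ forall t, 0 <= t -> monotone_op (S t).

Definition sg_le (S T : R -> X -> X) : Prop :=
  forall t x, 0 <= t -> le (S t x) (T t x).

Definition upper_bound {L : Type} (Ss : L -> R -> X -> X) (T : R -> X -> X) :=
  forall l, sg_le (Ss l) T.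

Definition envelope {L : Type} (Ss : L -> R -> X -> X) (S : R -> X -> X) :=
  [/\ semigroup S, upper_bound Ss S &
      forall T, semigroup T -> upper_bound Ss T -> sg_le S T].

Definition Jh {L : Type} (Ss : L -> R -> X -> X) (h : R) (x : X) : X :=
  if h == 0 then x else lsup [set Ss l h x | l in [set: L]].

(* A partition pi = {0 = t0 < t1 < ... < tm} is encoded by the strictly
   increasing list ts = [t1; ...; tm] of its nonzero points. *)
Fixpoint Jpi_from {L : Type} (Ss : L -> R -> X -> X) (prev : R) (ts : seq R)
  (x : X) : X :=
  match ts with
  | [::] => x
  | t1 :: ts' => Jh Ss (t1 - prev) (Jpi_from Ss t1 ts' x)
  end.

(* J_pi = J_{t1-t0} ... J_{tm-t(m-1)} *)
Definition Jpi {L : Type} (Ss : L -> R -> X -> X) (ts : seq R) : X -> X :=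
  Jpi_from Ss 0 ts.

End BL.

Definition in_Pt {R : realType} (t : R) (ts : seq R) : Prop :=
  path (fun a b : R => a < b) 0 ts /\ last 0 ts = t.

(* Order continuity makes every nonempty set that is bounded above have a
   supremum; as every J_pi x is dominated by T(t) x, both J_h x and
   S(t) x := sup_{pi in P_t} J_pi x exist.  Since J_(a+b) <= J_a J_b, refining a
   partition increases J_pi, so {J_pi x | pi in P_t} is directed.  Cutting a
   refined partition of [0, t+s] at t gives S(t+s) <= S(t) S(s); conversely a
   convex bounded operator maps a directed supremum below any common bound of
   the images (order continuity again, via the norm approximation of directed
   suprema), and concatenating partitions of [0, t] and [0, s] gives
   S(t) S(s) <= S(t+s).  Every semigroup upper bound dominates all J_pi, so S
   is the least one, and S(t) x is squeezed between S_l0(t) x and T(t) x, which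
   yields strong continuity. *)
From HB Require Import structures.
From mathcomp Require Import all_boot all_order all_algebra.
From mathcomp Require Import all_classical all_reals all_analysis.
From mathcomp Require Import ring lra.
Import Order.TTheory GRing.Theory Num.Theory.
Import numFieldNormedType.Exports.
Local Open Scope classical_set_scope.
Local Open Scope ring_scope.
Set Implicit Arguments. Unset Strict Implicit. Unset Printing Implicit Defensive.

Lemma directed_chain (I : Type) (Dr : I -> I -> Prop) :
  (forall i, Dr i i) -> (forall i j k, Dr i j -> Dr j k -> Dr i k) ->
  (forall i j, exists k, Dr i k /\ Dr j k) ->
  forall f : nat -> I, exists k : nat -> I,
    (forall n, Dr (f n) (k n)) /\ (forall n m, (n <= m)%N -> Dr (k n) (k m)).
Proof.
move=> Drefl Dtrans Ddir f.
have /choice [up hup] : forall p : I * I, exists k, Dr p.1 k /\ Dr p.2 k.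
  by move=> [i j]; exact: Ddir.
pose k := fix k n := if n is m.+1 then up (k m, f n) else f 0%N.
exists k; split=> [[|n]|n m]; [exact: Drefl|exact: (proj2 (hup (k n, f n.+1)))|].
elim: m => [|m IH]; first by rewrite leqn0 => /eqP ->.
rewrite leq_eqVlt => /orP [/eqP ->|/IH h]; first exact: Drefl.
exact: Dtrans h (proj1 (hup (k m, f m.+1))).
Qed.

Section Partitions.
Context {R : realType}.
Local Notation lt_rel := (fun a b : R => a < b).

Lemma path_lt_last (p : R) ts :
  path lt_rel p ts -> p <= last p ts /\ {in ts, forall u, u <= last p ts}.
Proof.
elim: ts p => [|a ts IH] p /=; first by split.
move=> /andP [pa /IH [a_last ts_last]]; split; first exact: le_trans (ltW pa) a_last.
by move=> u; rewrite inE => /orP [/eqP ->|/ts_last].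
Qed.

Lemma path_lt_shift (p c : R) ts :
  path lt_rel p ts -> path lt_rel (p + c) (map (fun u => u + c) ts).
Proof.
rewrite -[p + c]/((fun u => u + c) p) path_map.
by apply: sub_path => a b /=; rewrite ltrD2r.
Qed.

Lemma sorted_lt_subseq (s1 s : seq R) : sorted lt_rel s1 -> sorted lt_rel s ->
  {subset s1 <= s} -> subseq s1 s.
Proof.
move=> s1_sorted s_sorted s1s.
suff -> : s1 = [seq u <- s | u \in s1] by exact: filter_subseq.
apply: (@irr_sorted_eq _ lt_rel); first exact: lt_trans.
- by move=> a; rewrite ltxx.
- exact: s1_sorted.
- by apply: sorted_filter => //; exact: lt_trans.
by move=> u; rewrite mem_filter; case u_s1: (u \in s1); rewrite //= s1s.
Qed.

Lemma in_Pt0 ts : in_Pt (0 : R) ts -> ts = [::].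
Proof.
case: ts => // a ts [/= /andP [a_gt0 /path_lt_last [a_last _]] ts_last].
by move: (lt_le_trans a_gt0 a_last); rewrite ts_last ltxx.
Qed.

Lemma in_Pt_single (t : R) : 0 < t -> in_Pt t [:: t].
Proof. by move=> t_gt0; split=> //=; rewrite t_gt0. Qed.

Lemma in_Pt_ex (t : R) : 0 <= t -> exists ts, in_Pt t ts.
Proof.
rewrite le_eqVlt => /orP [/eqP <-|t_gt0]; first by exists [::].
by exists [:: t]; exact: in_Pt_single.
Qed.

Lemma in_PtP (t : R) ts : 0 < t ->
  in_Pt t ts <-> [/\ path lt_rel 0 ts, t \in ts & {in ts, forall u, u <= t}].
Proof.
move=> t_gt0; split=> [[ts_path ts_last]|[ts_path t_ts ts_le]].
  have [_ le_last] := path_lt_last ts_path; rewrite ts_last in le_last.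
  split=> //; case: ts ts_path ts_last {le_last} => [_ /= t0|a ts _ <- /=].
    by move: t_gt0; rewrite t0 ltxx.
  exact: mem_last.
split=> //; have [_ le_last] := path_lt_last ts_path.
apply/eqP; rewrite eq_le le_last // andbT ts_le //.
by case: ts t_ts {ts_path ts_le le_last} => //= a ts _; exact: mem_last.
Qed.

Lemma in_Pt_merge (t : R) ts1 ts2 : in_Pt t ts1 -> in_Pt t ts2 ->
  exists m, [/\ in_Pt t m, subseq ts1 m & subseq ts2 m].
Proof.
have [-> /in_Pt0 -> /in_Pt0 ->|t_neq0 h1 h2] := eqVneq t 0; first by exists [::].
have t_gt0 : 0 < t.
  rewrite lt_neqAle eq_sym t_neq0 -(proj2 h1) /=.
  exact: (proj1 (path_lt_last (proj1 h1))).
move: h1 h2; rewrite !in_PtP // => -[path1 t1 le1] [path2 _ le2].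
pose m := sort <=%R (undup (ts1 ++ ts2)).
have mem_m u : (u \in m) = (u \in ts1) || (u \in ts2).
  by rewrite mem_sort mem_undup mem_cat.
have m_sorted : sorted lt_rel m.
  rewrite lt_sorted_uniq_le sort_uniq undup_uniq sort_sorted //; exact: le_total.
have sorted1 := path_sorted path1; have sorted2 := path_sorted path2.
exists m; split; last 2 first.
- by apply: sorted_lt_subseq => // u u1; rewrite mem_m u1.
- by apply: sorted_lt_subseq => // u u2; rewrite mem_m u2 orbT.
rewrite in_PtP //; split; last by move=> u; rewrite mem_m => /orP [/le1|/le2].
  rewrite path_sortedE; last exact: lt_trans.
  rewrite m_sorted andbT; apply/allP => u; rewrite mem_m => /orP [].
    exact: (allP (order_path_min lt_trans path1)).
  exact: (allP (order_path_min lt_trans path2)).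
by rewrite mem_m t1.
Qed.

Lemma in_Pt_cat (t s : R) ts1 ts2 : in_Pt t ts1 -> in_Pt s ts2 ->
  in_Pt (t + s) (ts1 ++ map (fun u => u + t) ts2).
Proof.
move=> [path1 last1] [path2 last2]; split.
  by rewrite cat_path path1 last1 /= -[t in path _ t]add0r; exact: path_lt_shift.
rewrite last_cat last1 -[t in last t _]add0r -[0 + t]/((fun u => u + t) 0).
by rewrite last_map last2 addrC.
Qed.

Lemma in_Pt_split (t s : R) m : in_Pt (t + s) m -> t \in m ->
  exists m1 m2, [/\ in_Pt t m1, in_Pt s m2 & m = m1 ++ map (fun u => u + t) m2].
Proof.
move=> hm t_m; case/splitPr: t_m hm => m1 m2 [].
rewrite -cat_rcons cat_path last_rcons last_cat last_rcons => /andP [path1 path2] last2.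
exists (rcons m1 t), (map (fun u => u - t) m2); split.
- by split; rewrite ?last_rcons.
- split; first by rewrite -(subrr t); exact: path_lt_shift.
  rewrite -[0](subrr t) -[t - t]/((fun u => u - t) t) last_map last2.
  by rewrite addrC addKr.
by rewrite -map_comp map_id_in // => u _ /=; rewrite subrK.
Qed.

End Partitions.

Lemma semigroup_id {R : realType} {X : completeNormedModType R} (S : R -> X -> X) x :
  semigroup S -> S 0 x = x.
Proof. by case. Qed.

Lemma semigroupD {R : realType} {X : completeNormedModType R} (S : R -> X -> X) t s x :
  semigroup S -> 0 <= t -> 0 <= s -> S (t + s) x = S t (S s x).
Proof. by case=> _ _ SD; exact: SD. Qed.

Section BanachLattice.
Context {R : realType} {X : completeNormedModType R} (le : X -> X -> Prop).

Definition ubounds (D : set X) : set X := [set u | forall d, D d -> le d u].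

Definition directed (D : set X) : Prop :=
  forall d1 d2, D d1 -> D d2 -> exists d, [/\ D d, le d1 d & le d2 d].

Hypothesis BL : banach_lattice le.

Lemma bl_refl x : le x x.
Proof. by case: BL. Qed.

Lemma bl_anti x y : le x y -> le y x -> x = y.
Proof. by case: BL => _ [H] _; exact: H. Qed.

Lemma bl_trans x y z : le x y -> le y z -> le x z.
Proof. by case: BL => _ [_ [H]] _; exact: H. Qed.

Lemma blD2r x y z : le x y -> le (x + z) (y + z).
Proof. by case: BL => _ [_ [_ [H]]] _; exact: H. Qed.

Lemma blZ (a : R) x y : 0 <= a -> le x y -> le (a *: x) (a *: y).
Proof. by case: BL => _ [_ [_ [_ [H]]]] _; exact: H. Qed.

Lemma bl_join x y : exists s, is_sup le [set x; y] s.
Proof. by case: BL => _ [_ [_ [_ [_ [H]]]]] _; exact: H. Qed.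

Lemma bl_norm_abs_le x y ax ay :
  is_abs le x ax -> is_abs le y ay -> le ax ay -> `|x| <= `|y|.
Proof. by case: BL => _ [_ [_ [_ [_ [_ H]]]]]; exact: H. Qed.

Lemma blD2l x y z : le x y -> le (z + x) (z + y).
Proof. by rewrite ![z + _]addrC; exact: blD2r. Qed.

Lemma blD a b c d : le a b -> le c d -> le (a + c) (b + d).
Proof. by move=> hab hcd; apply: bl_trans (blD2r c hab) (blD2l b hcd). Qed.

Lemma blN2 x y : le x y -> le (- y) (- x).
Proof.
move=> /(blD2r (- x - y)).
by rewrite addrA subrr add0r addrCA subrr addr0.
Qed.

Lemma blB2l x y z : le x y -> le (z - y) (z - x).
Proof. by move=> /blN2; exact: blD2l. Qed.

Lemma bl_subr_ge0 x y : le 0 (y - x) <-> le x y.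
Proof.
by split=> [/(blD2r x)|/(blD2r (- x))]; rewrite ?add0r ?subrK ?subrr.
Qed.

Lemma bl_subr_le0 x y : le (x - y) 0 <-> le x y.
Proof.
by split=> [/(blD2r y)|/(blD2r (- y))]; rewrite ?add0r ?subrK ?subrr.
Qed.

Lemma bl_sub_swap a d w : le a (w - d) -> le d (w - a).
Proof. by move=> /(blD2r (d - a)); rewrite addrCA subrr addr0 addrA subrK. Qed.

Lemma is_sup2_ub s x y : is_sup le [set x; y] s -> le x s /\ le y s.
Proof. by case=> ub _; split; apply: ub; [left | right]. Qed.

Lemma is_sup2_least s x y u : is_sup le [set x; y] s -> le x u -> le y u -> le s u.
Proof. by case=> _ least hx hy; apply: least => z [->|->]. Qed.

Lemma bl_meet x y :
  exists m, [/\ le m x, le m y & forall z, le z x -> le z y -> le z m].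
Proof.
have [s hs] := bl_join (- x) (- y); have [hx hy] := is_sup2_ub hs.
exists (- s); split; [by rewrite -[x]opprK; exact: blN2
                     |by rewrite -[y]opprK; exact: blN2|].
move=> z zx zy; rewrite -[z]opprK; apply: blN2.
exact: is_sup2_least hs (blN2 zx) (blN2 zy).
Qed.

Lemma is_sup_unique A s1 s2 : is_sup le A s1 -> is_sup le A s2 -> s1 = s2.
Proof.
by case=> ub1 least1 [ub2 least2]; apply: bl_anti; [apply: least1|apply: least2].
Qed.

Lemma lsupP A : (exists s, is_sup le A s) -> is_sup le A (lsup le A).
Proof. exact: xgetPex. Qed.

Lemma abs_ge0 x ax : is_abs le x ax -> le 0 ax.
Proof.
move=> /is_sup2_ub [hx hNx].
have /blZ : (0 : R) <= 2^-1 by rewrite invr_ge0.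
move=> /(_ _ _ (blD hx hNx)); rewrite subrr scaler0.
by rewrite -mulr2n -[ax *+ 2]scaler_nat scalerA mulVf ?pnatr_eq0 // scale1r.
Qed.

Lemma abs_id z : le 0 z -> is_abs le z z.
Proof.
move=> z0; split=> [a [->|->]|u]; last by apply; left.
  exact: bl_refl.
by apply: bl_trans (blN2 z0) _; rewrite oppr0.
Qed.

Lemma norm_abs a aa : is_abs le a aa -> `|aa| = `|a|.
Proof.
move=> h; have /abs_id h0 := abs_ge0 h.
by apply/eqP; rewrite eq_le (bl_norm_abs_le h0 h) ?(bl_norm_abs_le h h0) //;
  exact: bl_refl.
Qed.

Lemma bl_norm_le a e ae : le 0 a -> is_abs le e ae -> le a ae -> `|a| <= `|e|.
Proof. by move=> /abs_id; exact: bl_norm_abs_le. Qed.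

Lemma bl_norm_mono a b : le 0 a -> le a b -> `|a| <= `|b|.
Proof. by move=> a0 ab; apply: bl_norm_le a0 (abs_id (bl_trans a0 ab)) ab. Qed.

Lemma bl_norm_sandwich a y b : le a y -> le y b -> `|y| <= `|a| + `|b|.
Proof.
move=> ay yb; have [aa ha] := bl_join a (- a); have [ab hb] := bl_join b (- b).
have [ay' hy] := bl_join y (- y).
have [aa0 ab0] := (abs_ge0 ha, abs_ge0 hb).
have hab0 : le 0 (aa + ab) by rewrite -(addr0 0); exact: blD.
have : le ay' (aa + ab).
  apply: (is_sup2_least hy).
    apply: bl_trans yb (bl_trans (proj1 (is_sup2_ub hb)) _).
    by rewrite -{1}(add0r ab); exact: blD2r.
  apply: bl_trans (blN2 ay) (bl_trans (proj2 (is_sup2_ub ha)) _).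
  by rewrite -{1}(addr0 aa); exact: blD2l.
move=> /(bl_norm_abs_le hy (abs_id hab0)) /le_trans; apply.
by rewrite -(norm_abs ha) -(norm_abs hb); exact: ler_normD.
Qed.

Lemma bl_le0_approx v :
  (forall eps : R, 0 < eps -> exists e, le v e /\ `|e| < eps) -> le v 0.
Proof.
move=> small; have [vp hvp] := bl_join v 0; have [hv h0] := is_sup2_ub hvp.
suff vp0 : vp = 0 by rewrite -vp0.
apply/normr0_eq0/eqP; rewrite eq_le normr_ge0 andbT leNgt; apply/negP => vp_gt0.
have [e [ve e_lt]] := small _ vp_gt0; have [ae hae] := bl_join e (- e).
suff : `|vp| <= `|e| by rewrite leNgt e_lt.
apply: (bl_norm_le h0 hae); apply: (is_sup2_least hvp _ (abs_ge0 hae)).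
exact: bl_trans ve (proj1 (is_sup2_ub hae)).
Qed.

Lemma squeeze_is_sup (D : set X) (a u : nat -> X) :
  (forall n, D (a n)) -> (forall n, ubounds D (u n)) ->
  (forall n m, (n <= m)%N -> le (a n) (a m)) ->
  (forall n, `|u n - a n| < n.+1%:R^-1) ->
  is_sup le D (lim (a @ \oo)).
Proof.
move=> Da Uu a_incr ua_small.
have a_cauchy n m : (n <= m)%N -> `|a n - a m| < n.+1%:R^-1.
  move=> nm; rewrite -normrN opprB; apply: le_lt_trans (ua_small n).
  apply: bl_norm_mono; first exact/bl_subr_ge0/a_incr.
  exact: blD2r (Uu n _ (Da m)).
have /cvgrPdist_lt a_cvg : a @ \oo --> lim (a @ \oo).
  apply: cauchy_cvg; apply: cauchy_exP => e e_gt0.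
  have [N _ hN] := near_infty_natSinv_lt (PosNum e_gt0).
  exists (a N), N => // n /= Nn; rewrite -ball_normE /=.
  exact: lt_trans (a_cauchy _ _ Nn) (hN _ (leqnn N)).
set s := lim (a @ \oo).
have approx eps : 0 < eps -> exists n, `|s - a n| < eps / 2 /\ `|u n - a n| < eps / 2.
  move=> eps_gt0; have e2 : 0 < eps / 2 by rewrite divr_gt0.
  have [N _ hN] := a_cvg _ e2; have [M _ hM] := near_infty_natSinv_lt (PosNum e2).
  exists (maxn N M); split; first by apply: hN; rewrite /= leq_maxl.
  by apply: lt_trans (ua_small _) (hM _ _); rewrite /= leq_maxr.
split=> [d Dd|v Uv]; rewrite -bl_subr_le0; apply: bl_le0_approx => eps eps_gt0;
  have [n [sa ua]] := approx _ eps_gt0.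
- exists (u n - s); split; first exact: blD2r (Uu n d Dd).
  have -> : u n - s = (u n - a n) - (s - a n) by rewrite opprB addrA subrK.
  by apply: le_lt_trans (ler_normB _ _) _; rewrite [eps]splitr; exact: ltrD.
- exists (s - a n); split; first exact: blB2l (Uv _ (Da n)).
  by apply: lt_trans sa _; lra.
Qed.

Lemma ubounds_sub_inf (D : set X) d0 b : D d0 -> ubounds D b ->
  is_inf le [set u - d | u in ubounds D & d in D] 0.
Proof.
move=> Dd0 Db; split=> [_ [u Uu [d Dd <-]]|z zlb]; first exact/bl_subr_ge0/Uu.
have [zp hzp] := bl_join z 0; have [z_zp zp_ge0] := is_sup2_ub hzp.
have zp_lb u d : ubounds D u -> D d -> le zp (u - d).
  move=> Uu Dd; apply: (is_sup2_least hzp); last exact/bl_subr_ge0/Uu.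
  by apply: zlb; exists u => //; exists d.
(* Archimedean argument: [z^+] can be subtracted from any upper bound, so
   [n z^+ <= b - d0] for every [n]. *)
have Ushift n : ubounds D (b - n%:R *: zp).
  elim: n => [|n IH]; first by rewrite scale0r subr0.
  rewrite -natr1 scalerDl scale1r opprD addrA => d Dd.
  exact: bl_sub_swap (zp_lb _ _ IH Dd).
have n_zp_le n : n%:R * `|zp| <= `|b - d0|.
  have : le 0 (n%:R *: zp).
    by rewrite -(scaler0 _ (n%:R : R)); exact: blZ.
  move=> /bl_norm_mono /(_ (bl_sub_swap (Ushift n d0 Dd0))).
  by rewrite normrZ ger0_norm.
suff zp0 : zp = 0 by rewrite -zp0.
apply/normr0_eq0/eqP; rewrite eq_le normr_ge0 andbT leNgt; apply/negP => zp_gt0.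
have := n_zp_le (Num.trunc (`|b - d0| / `|zp|)).+1.
have := truncnS_gt (`|b - d0| / `|zp|).
by rewrite ltr_pdivrMr // => /lt_le_trans h /h; rewrite ltxx.
Qed.

Lemma finite_has_sup (F : seq X) x : exists s, is_sup le [set y | y \in x :: F] s.
Proof.
elim: F x => [|y F IH] x.
  exists x; split=> [z|u]; last by apply; rewrite /= inE.
  by rewrite /= inE => /eqP ->; exact: bl_refl.
have [s' [ub' least']] := IH y; have [s hs] := bl_join x s'.
have [xs s's] := is_sup2_ub hs.
exists s; split=> [z|u ub].
  by rewrite /= inE => /orP [/eqP -> //|/ub' zs']; exact: bl_trans zs' s's.
apply: (is_sup2_least hs); first by apply: ub; rewrite /= inE eqxx.
by apply: least' => z zF; apply: ub; rewrite /= inE zF orbT.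
Qed.

Section OrderContinuous.
Hypothesis OC : order_continuous le.

Lemma directed_has_sup (D : set X) d0 b : D d0 -> ubounds D b -> directed D ->
  exists s, is_sup le D s.
Proof.
move=> Dd0 Db Ddir.
(* Order continuity is applied to the net (u, d) |-> u - d, indexed by the
   upper bounds u and the elements d of D. *)
pose I := {p : X * X | ubounds D p.1 /\ D p.2}.
pose Dr (i j : I) := le (sval j).1 (sval i).1 /\ le (sval i).2 (sval j).2.
pose gap (i : I) := (sval i).1 - (sval i).2.
have i0 : I by exists (b, d0).
have Drefl i : Dr i i by split; exact: bl_refl.
have Dtrans i j k : Dr i j -> Dr j k -> Dr i k.
  by move=> [h1 h2] [h3 h4]; split; [exact: bl_trans h3 h1 | exact: bl_trans h2 h4].
have Ddir' i j : exists k, Dr i k /\ Dr j k.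
  case: i j => [[ui di] [/= Ui Di]] [[uj dj] [/= Uj Dj]].
  have [m [mi mj mglb]] := bl_meet ui uj.
  have [d [Dd did djd]] := Ddir di dj Di Dj.
  have Um : ubounds D m by move=> d' Dd'; apply: mglb; [exact: Ui | exact: Uj].
  by exists (exist _ (m, d) (conj Um Dd)).
have gap_decr i j : Dr i j -> le (gap j) (gap i).
  by move=> [h1 h2]; exact: bl_trans (blD2r _ h1) (blB2l _ h2).
have gap_inf : is_inf le (range gap) 0.
  suff -> : range gap = [set u - d | u in ubounds D & d in D].
    exact: ubounds_sub_inf Dd0 Db.
  apply/seteqP; split=> [_ [[[u d] [Uu Dd]] _ <-]|_ [u Uu [d Dd <-]]].
    by exists u => //; exists d.
  by exists (exist _ (u, d) (conj Uu Dd)).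
have /choice [f hf] := fun n : nat => @OC I Dr gap (ex_intro _ i0 Logic.I) Drefl Dtrans
  Ddir' gap_decr gap_inf n.+1%:R^-1 ltac:(by rewrite invr_gt0 ltr0Sn).
have [k [fk k_incr]] := directed_chain Drefl Dtrans Ddir' f.
exists (lim ((fun n => (sval (k n)).2) @ \oo)).
apply: (@squeeze_is_sup _ _ (fun n => (sval (k n)).1)).
- by move=> n; case: (svalP (k n)).
- by move=> n; case: (svalP (k n)).
- by move=> n m /k_incr [].
- by move=> n; exact: hf n (k n) (fk n).
Qed.

Lemma bounded_has_sup (A : set X) a0 b : A a0 -> ubounds A b -> exists s, is_sup le A s.
Proof.
move=> Aa0 Ab.
(* The finite suprema of elements of A form a directed set with the same
   upper bounds. *)
pose fsups := [set s | exists2 F : seq X,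
  (forall y, y \in F -> A y) & is_sup le [set y | y \in a0 :: F] s].
have a0F F : (forall y, y \in F -> A y) -> forall y, y \in a0 :: F -> A y.
  by move=> FA y; rewrite inE => /orP [/eqP -> //|/FA].
have [s0 hs0] := finite_has_sup [::] a0.
have [S [Sub Sleast]] : exists S, is_sup le fsups S.
  apply: (@directed_has_sup fsups s0 b); first by exists [::].
    by move=> d [F FA [_ least]]; apply: least => y /(a0F _ FA); exact: Ab.
  move=> d1 d2 [F1 F1A [_ least1]] [F2 F2A [_ least2]].
  have [s [ub least]] := finite_has_sup (F1 ++ F2) a0.
  have F12 y : y \in a0 :: F1 \/ y \in a0 :: F2 -> y \in a0 :: F1 ++ F2.
    by rewrite !inE mem_cat => -[/orP [->|->]|/orP [->|->]]; rewrite ?orbT.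
  exists s; split.
  - by exists (F1 ++ F2) => // y; rewrite mem_cat => /orP [/F1A|/F2A].
  - by apply: least1 => y y1; apply: ub; apply: F12; left.
  - by apply: least2 => y y2; apply: ub; apply: F12; right.
exists S; split=> [a Aa|u ub].
  have [s hs] := finite_has_sup [:: a] a0.
  apply: bl_trans (proj1 hs a _) (Sub s _); first by rewrite /= !inE eqxx orbT.
  by exists [:: a] => // y; rewrite inE => /eqP ->.
apply: Sleast => s [F FA [_ least]].
by apply: least => y /(a0F _ FA); exact: ub.
Qed.

Lemma directed_sup_approx (D : set X) d0 y : D d0 -> directed D -> is_sup le D y ->
  forall eps : R, 0 < eps -> exists2 d, D d & `|y - d| < eps.
Proof.
move=> Dd0 Ddir [Dub Dleast] eps eps_gt0.
pose I := {d : X | D d}.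
have gap_inf : is_inf le (range (fun i : I => y - sval i)) 0.
  split=> [_ [[d Dd] _ <-]|z zlb]; first exact/bl_subr_ge0/Dub.
  have : le y (y - z).
    apply: Dleast => d Dd; apply: bl_sub_swap; apply: zlb.
    by exists (exist _ d Dd).
  by move=> /(blB2l y); rewrite subrr opprB addrC subrK.
have Idir (i j : I) : exists k : I, le (sval i) (sval k) /\ le (sval j) (sval k).
  by have [k [Dk ik jk]] := Ddir _ _ (svalP i) (svalP j); exists (exist _ k Dk).
have [[d Dd] hd] := @OC I (fun i j : I => le (sval i) (sval j)) (fun i => y - sval i)
  (ex_intro _ (exist _ d0 Dd0) Logic.I) (fun i => bl_refl (sval i))
  (fun i j k => @bl_trans _ _ _) Idir (fun i j h => blB2l _ h) gap_inf eps eps_gt0.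
by exists d => //; apply: (hd (exist _ d Dd)); exact: bl_refl.
Qed.

(* With w := d + mu^-1 (y - d) one has y = (1 - mu) d + mu w. *)
Lemma convex_op_subr_le (A : X -> X) (mu : R) y d : convex_op le A -> 0 < mu <= 1 ->
  le (A y - A d) (mu *: (A (d + mu^-1 *: (y - d)) - A d)).
Proof.
move=> Acvx /andP [mu_gt0 mu_le1]; set w := d + mu^-1 *: (y - d).
have y_conv : (1 - mu) *: d + (1 - (1 - mu)) *: w = y.
  rewrite subKr /w scalerDr scalerA mulfV ?gt_eqF // scale1r addrA -scalerDl.
  by rewrite subrK scale1r addrC subrK.
have /(blD2r (- A d)) := Acvx (1 - mu) d w ltac:(apply/andP; split; lra).
rewrite y_conv subKr scalerBl scale1r scalerBr.
by rewrite addrAC [A d - _ - A d]addrAC subrr add0r addrC.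
Qed.

Lemma convex_op_directed_sup_le (A : X -> X) (D : set X) d0 y z :
  convex_op le A -> bounded_op A -> D d0 -> directed D -> is_sup le D y ->
  (forall d, D d -> le (A d) z) -> le (A y) z.
Proof.
move=> Acvx Abd Dd0 Ddir ysup Az.
rewrite -bl_subr_le0; apply: bl_le0_approx => eps eps_gt0.
have [M AM] := Abd (`|y| + 2) ltac:(by apply: ltr_wpDl).
have M_ge0 : 0 <= M by apply: le_trans (normr_ge0 _) (AM y _); rewrite lerDl.
set mu := Num.min 1 (eps / (2 * M + 1)).
have mu_le1 : mu <= 1 by rewrite ge_min lexx.
have mu_small : mu <= eps / (2 * M + 1) by rewrite ge_min lexx orbT.
have mu_gt0 : 0 < mu by rewrite lt_min ltr01 /= divr_gt0 //; lra.
have [d Dd yd] := directed_sup_approx Dd0 Ddir ysup mu_gt0.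
set w := d + mu^-1 *: (y - d).
exists (mu *: (A w - A d)); split.
  apply: bl_trans (blB2l _ (Az d Dd)) (convex_op_subr_le _ _ Acvx _).
  by rewrite mu_gt0.
have d_le : `|d| <= `|y| + 1.
  have -> : d = y - (y - d) by rewrite opprB addrC subrK.
  apply: le_trans (ler_normB _ _) _; rewrite lerD2l; lra.
have w_le : `|w| <= `|y| + 2.
  apply: le_trans (ler_normD _ _) _; rewrite normrZ ger0_norm ?invr_ge0 ?ltW //.
  have : mu^-1 * `|y - d| < 1 by rewrite ltr_pdivrMl // mulr1.
  lra.
have Awd : `|A w - A d| <= M + M.
  by apply: le_trans (ler_normB _ _) _; apply: lerD; apply: AM => //; lra.
rewrite normrZ ger0_norm ?ltW //.
have : mu * (2 * M + 1) <= eps by rewrite -ler_pdivlMr // ltr_wpDl // mulr_ge0.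
nra.
Qed.

Section Envelope.
Context {L : Type} (Ss : L -> R -> X -> X) (T : R -> X -> X).
Hypothesis L_inhabited : exists l : L, True.
Hypothesis Ss_cvx_mono :
  forall l, convex_semigroup le (Ss l) /\ monotone_semigroup le (Ss l).
Hypotheses (T_sg : semigroup T) (T_ub : upper_bound le Ss T).

Local Notation J := (Jh le Ss).
Local Notation Jf := (Jpi_from le Ss).
Local Notation Jpi := (Jpi le Ss).
Local Notation lt_rel := (fun a b : R => a < b).

Lemma Ss_sg l : semigroup (Ss l).
Proof. by case: (Ss_cvx_mono l) => [[]]. Qed.

Lemma Ss_mono l t : 0 <= t -> monotone_op le (Ss l t).
Proof. by case: (Ss_cvx_mono l) => _ [_ Ss_mono]; exact: Ss_mono. Qed.

Lemma Ss_cvx l t : 0 <= t -> convex_op le (Ss l t).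
Proof. by case: (Ss_cvx_mono l) => [[_ Ss_cvx] _]; exact: Ss_cvx. Qed.

Lemma Jh_is_sup h x : 0 < h -> is_sup le [set Ss l h x | l in [set: L]] (J h x).
Proof.
move=> h_gt0; rewrite /Jh gt_eqF //; apply: lsupP.
have [l0 _] := L_inhabited.
apply: (bounded_has_sup (a0 := Ss l0 h x) (b := T h x)); first by exists l0.
by move=> _ [l _ <-]; apply: T_ub; exact: ltW.
Qed.

Lemma Jh_ge l h x : 0 < h -> le (Ss l h x) (J h x).
Proof. by move=> h_gt0; apply: (proj1 (Jh_is_sup x h_gt0)); exists l. Qed.

Lemma Jh_le_ub (T' : R -> X -> X) h x :
  upper_bound le Ss T' -> 0 < h -> le (J h x) (T' h x).
Proof.
move=> T'_ub h_gt0; apply: (proj2 (Jh_is_sup x h_gt0)) => _ [l _ <-].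
by apply: T'_ub; exact: ltW.
Qed.

Lemma Jh_mono h : 0 <= h -> monotone_op le (J h).
Proof.
rewrite le_eqVlt => /orP [/eqP <-|h_gt0] x y xy; first by rewrite /Jh eqxx.
apply: (proj2 (Jh_is_sup x h_gt0)) => _ [l _ <-].
exact: bl_trans (Ss_mono l (ltW h_gt0) xy) (Jh_ge l y h_gt0).
Qed.

Lemma Jh_cvx h : 0 <= h -> convex_op le (J h).
Proof.
rewrite le_eqVlt => /orP [/eqP <-|h_gt0] lam x y lam01.
  by rewrite /Jh eqxx; exact: bl_refl.
have /andP [lam_ge0 lam_le1] := lam01.
apply: (proj2 (Jh_is_sup _ h_gt0)) => _ [l _ <-].
apply: bl_trans (Ss_cvx l (ltW h_gt0) x y lam01) _.
by apply: blD; apply: blZ; rewrite ?subr_ge0 //; exact: Jh_ge.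
Qed.

Lemma JhD_le h1 h2 x : 0 < h1 -> 0 < h2 -> le (J (h1 + h2) x) (J h1 (J h2 x)).
Proof.
move=> h1_gt0 h2_gt0.
apply: (proj2 (Jh_is_sup x (addr_gt0 h1_gt0 h2_gt0))) => _ [l _ <-].
rewrite (semigroupD _ (Ss_sg l) (ltW h1_gt0) (ltW h2_gt0)).
apply: bl_trans (Jh_ge l _ h1_gt0).
exact: Ss_mono (ltW h1_gt0) _ _ (Jh_ge l x h2_gt0).
Qed.

Lemma Jf_mono p ts : path lt_rel p ts -> monotone_op le (Jf p ts).
Proof.
elim: ts p => [|a ts IH] p /=; first by move=> _ x y.
move=> /andP [pa /IH ts_mono] x y xy.
by apply: Jh_mono; [rewrite subr_ge0 ltW | exact: ts_mono].
Qed.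

Lemma Jf_cvx p ts : path lt_rel p ts -> convex_op le (Jf p ts).
Proof.
elim: ts p => [|a ts IH] p /=; first by move=> _ lam x y _; exact: bl_refl.
move=> /andP [pa /IH ts_cvx] lam x y lam01.
have ap_ge0 : 0 <= a - p by rewrite subr_ge0 ltW.
apply: bl_trans (Jh_cvx ap_ge0 _ _ lam01).
exact: Jh_mono ap_ge0 _ _ (ts_cvx lam x y lam01).
Qed.

Lemma Jf_cat p s1 s2 x : Jf p (s1 ++ s2) x = Jf p s1 (Jf (last p s1) s2 x).
Proof. by elim: s1 p => [|a s1 IH] p //=; rewrite IH. Qed.

Lemma Jf_shift p c ts x : Jf (p + c) (map (fun u => u + c) ts) x = Jf p ts x.
Proof. by elim: ts p => [|a ts IH] p //=; rewrite IH opprD addrACA subrr addr0. Qed.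

Lemma Jf_le_ub (T' : R -> X -> X) p ts r y :
  semigroup T' -> upper_bound le Ss T' -> path lt_rel p ts -> 0 <= r ->
  le (Jf p ts (T' r y)) (T' (last p ts - p + r) y).
Proof.
move=> T'_sg T'_ub; elim: ts p => [|a ts IH] p /=.
  by move=> _ _; rewrite subrr add0r; exact: bl_refl.
move=> /andP [pa ts_path] r_ge0.
have ap_gt0 : 0 < a - p by rewrite subr_gt0.
have rest_ge0 : 0 <= last a ts - a + r.
  by rewrite addr_ge0 // subr_ge0; exact: (proj1 (path_lt_last ts_path)).
apply: bl_trans (Jh_mono (ltW ap_gt0) (IH _ ts_path r_ge0)) _.
apply: bl_trans (Jh_le_ub _ T'_ub ap_gt0) _.
rewrite -(semigroupD _ T'_sg (ltW ap_gt0) rest_ge0).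
have -> : a - p + (last a ts - a + r) = last a ts - p + r by ring.
exact: bl_refl.
Qed.

Lemma Jf_subseq_le p ts ts' x : path lt_rel p ts' -> subseq ts ts' ->
  last p ts = last p ts' -> le (Jf p ts x) (Jf p ts' x).
Proof.
elim: ts' p ts => [|a r IH] p ts; first by rewrite subseq0 => _ /eqP -> _; exact: bl_refl.
move=> /= /andP [pa r_path]; have ap_ge0 : 0 <= a - p by rewrite subr_ge0 ltW.
case: ts => [_ /= p_last|b q].
  have [p_le _] := path_lt_last r_path.
  by move: (lt_le_trans pa p_le); rewrite -p_last ltxx.
rewrite /=; case: eqP => [-> q_r q_last|_ bq_r bq_last].
  by apply: Jh_mono ap_ge0 _ _ _; exact: IH.
have ab : a < b.
  apply: (allP (order_path_min lt_trans r_path)).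
  by apply: (mem_subseq bq_r); rewrite inE eqxx.
have -> : b - p = (a - p) + (b - a) by ring.
have [ap_gt0 ba_gt0] : 0 < a - p /\ 0 < b - a by rewrite !subr_gt0.
apply: bl_trans (JhD_le _ ap_gt0 ba_gt0) _.
exact: Jh_mono ap_ge0 _ _ (IH a (b :: q) r_path bq_r bq_last).
Qed.

Lemma Jpi_mono t ts : in_Pt t ts -> monotone_op le (Jpi ts).
Proof. by case=> ts_path _; exact: Jf_mono. Qed.

Lemma Jpi_cvx t ts : in_Pt t ts -> convex_op le (Jpi ts).
Proof. by case=> ts_path _; exact: Jf_cvx. Qed.

Lemma Jpi_le_ub (T' : R -> X -> X) t ts x : semigroup T' -> upper_bound le Ss T' ->
  in_Pt t ts -> le (Jpi ts x) (T' t x).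
Proof.
move=> T'_sg T'_ub [ts_path ts_last].
have := Jf_le_ub x T'_sg T'_ub ts_path (lexx 0).
by rewrite /Jpi (semigroup_id _ T'_sg) ts_last subr0 addr0.
Qed.

Lemma Jpi_subseq_le t ts ts' x : in_Pt t ts -> in_Pt t ts' -> subseq ts ts' ->
  le (Jpi ts x) (Jpi ts' x).
Proof.
by move=> [_ ts_last] [ts'_path ts'_last] sub; apply: Jf_subseq_le; rewrite ?ts_last.
Qed.

Lemma Jpi_cat t ts1 ts2 x : in_Pt t ts1 ->
  Jpi (ts1 ++ map (fun u => u + t) ts2) x = Jpi ts1 (Jpi ts2 x).
Proof.
move=> [_ ts1_last]; rewrite /Jpi Jf_cat ts1_last.
by have := Jf_shift 0 t ts2 x; rewrite add0r => ->.
Qed.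

Lemma Jpi_directed t x : directed [set Jpi ts x | ts in in_Pt t].
Proof.
move=> _ _ [ts1 h1 <-] [ts2 h2 <-]; have [m [hm s1 s2]] := in_Pt_merge h1 h2.
exists (Jpi m x); split; first by exists m.
  exact: Jpi_subseq_le h1 hm s1.
exact: Jpi_subseq_le h2 hm s2.
Qed.

Definition Senv (t : R) (x : X) : X := lsup le [set Jpi ts x | ts in in_Pt t].

Lemma Senv_is_sup t x : 0 <= t -> is_sup le [set Jpi ts x | ts in in_Pt t] (Senv t x).
Proof.
move=> t_ge0; apply: lsupP; have [ts hts] := in_Pt_ex t_ge0.
apply: (bounded_has_sup (a0 := Jpi ts x) (b := T t x)); first by exists ts.
by move=> _ [ts' hts' <-]; exact: Jpi_le_ub.
Qed.

Lemma Senv_ge_Jpi t ts x : in_Pt t ts -> le (Jpi ts x) (Senv t x).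
Proof.
move=> hts; have t_ge0 : 0 <= t by case: hts => /path_lt_last [] + _ <-.
by apply: (proj1 (Senv_is_sup x t_ge0)); exists ts.
Qed.

Lemma Senv0 x : Senv 0 x = x.
Proof.
apply: is_sup_unique (Senv_is_sup x (lexx 0)) _.
split=> [_ [ts /in_Pt0 -> <-]|u]; first exact: bl_refl.
by apply; exists [::].
Qed.

Lemma Senv_ge l t x : 0 <= t -> le (Ss l t x) (Senv t x).
Proof.
rewrite le_eqVlt => /orP [/eqP <-|t_gt0].
  by rewrite Senv0 (semigroup_id _ (Ss_sg l)); exact: bl_refl.
apply: bl_trans (Jh_ge l x t_gt0) _.
have := Senv_ge_Jpi x (in_Pt_single t_gt0); by rewrite /Jpi /= subr0.
Qed.

Lemma Senv_le_ub (T' : R -> X -> X) t x : semigroup T' -> upper_bound le Ss T' ->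
  0 <= t -> le (Senv t x) (T' t x).
Proof.
move=> T'_sg T'_ub t_ge0; apply: (proj2 (Senv_is_sup x t_ge0)) => _ [ts hts <-].
exact: Jpi_le_ub.
Qed.

Lemma Senv_cvx t : 0 <= t -> convex_op le (Senv t).
Proof.
move=> t_ge0 lam x y lam01; apply: (proj2 (Senv_is_sup _ t_ge0)) => _ [ts hts <-].
apply: bl_trans (Jpi_cvx hts x y lam01) _; have /andP [lam_ge0 lam_le1] := lam01.
by apply: blD; apply: blZ; rewrite ?subr_ge0 //; exact: Senv_ge_Jpi.
Qed.

Lemma Senv_bounded t : 0 <= t -> bounded_op (Senv t).
Proof.
move=> t_ge0 r r_gt0; have [l0 _] := L_inhabited.
have [M1 hM1] : exists M, forall x, `|x| <= r -> `|Ss l0 t x| <= M.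
  by case: (Ss_sg l0) => Ss_bd _ _; exact: Ss_bd.
have [M2 hM2] : exists M, forall x, `|x| <= r -> `|T t x| <= M.
  by case: T_sg => T_bd _ _; exact: T_bd.
exists (M1 + M2) => x x_le.
apply: le_trans (bl_norm_sandwich (Senv_ge l0 x t_ge0) (Senv_le_ub x T_sg T_ub t_ge0)) _.
by apply: lerD; [exact: hM1 | exact: hM2].
Qed.

Lemma SenvD_le t s x : 0 < t -> 0 < s -> le (Senv (t + s) x) (Senv t (Senv s x)).
Proof.
move=> t_gt0 s_gt0.
apply: (proj2 (Senv_is_sup x (ltW (addr_gt0 t_gt0 s_gt0)))) => _ [ts hts <-].
have pair : in_Pt (t + s) [:: t; t + s] by split=> //=; rewrite t_gt0 ltrDl s_gt0.
have [m [hm ts_m pair_m]] := in_Pt_merge hts pair.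
have t_m : t \in m by apply: (mem_subseq pair_m); rewrite inE eqxx.
apply: bl_trans (Jpi_subseq_le x hts hm ts_m) _.
have [m1 [m2 [h1 h2 ->]]] := in_Pt_split hm t_m; rewrite Jpi_cat //.
exact: bl_trans (Jpi_mono h1 (Senv_ge_Jpi x h2)) (Senv_ge_Jpi _ h1).
Qed.

Lemma SenvD_ge t s x : 0 <= t -> 0 <= s -> le (Senv t (Senv s x)) (Senv (t + s) x).
Proof.
move=> t_ge0 s_ge0; have [ts0 hts0] := in_Pt_ex s_ge0.
have D_ts0 : [set Jpi ts x | ts in in_Pt s] (Jpi ts0 x) by exists ts0.
apply: (convex_op_directed_sup_le (Senv_cvx t_ge0) (Senv_bounded t_ge0) D_ts0
  (@Jpi_directed s x) (Senv_is_sup x s_ge0)).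
move=> _ [ts2 h2 <-]; apply: (proj2 (Senv_is_sup _ t_ge0)) => _ [ts1 h1 <-].
by rewrite -(Jpi_cat _ _ h1); apply: Senv_ge_Jpi; exact: in_Pt_cat.
Qed.

Lemma Senv_semigroup : semigroup Senv.
Proof.
split=> [t|x|t s x]; [exact: Senv_bounded | exact: Senv0 |].
rewrite le_eqVlt => /orP [/eqP <-|t_gt0]; first by rewrite add0r Senv0.
rewrite le_eqVlt => /orP [/eqP <-|s_gt0]; first by rewrite addr0 Senv0.
by apply: bl_anti; [exact: SenvD_le | apply: SenvD_ge; exact: ltW].
Qed.

Lemma Senv_envelope : envelope le Ss Senv.
Proof.
split; [exact: Senv_semigroup | by move=> l t x; exact: Senv_ge |].
by move=> T' T'_sg T'_ub t x; exact: Senv_le_ub.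
Qed.

Lemma Senv_C0 : C0_semigroup T -> (exists l0, C0_semigroup (Ss l0)) -> C0_semigroup Senv.
Proof.
move=> [_ T_cont] [l0 [_ Ss_cont]]; split=> [|x]; first exact: Senv_semigroup.
apply/cvgrPdist_lt => e e_gt0; have e2_gt0 : 0 < e / 2 by rewrite divr_gt0.
move/cvgrPdist_lt: (T_cont x) => /(_ _ e2_gt0) T_near.
move/cvgrPdist_lt: (Ss_cont x) => /(_ _ e2_gt0) Ss_near.
near=> t; have t_ge0 : 0 <= t by apply: ltW; near: t; exact: nbhs_right_gt.
apply: le_lt_trans (bl_norm_sandwich (blB2l x (Senv_le_ub x T_sg T_ub t_ge0))
  (blB2l x (Senv_ge l0 x t_ge0))) _.
by rewrite [e]splitr; apply: ltrD; [near: t; exact: T_near | near: t; exact: Ss_near].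
Unshelve. all: by end_near.
Qed.

End Envelope.
End OrderContinuous.
End BanachLattice.

Unset Implicit Arguments. Set Strict Implicit. Set Printing Implicit Defensive.

Theorem corollary4p4 (R : realType) (X : completeNormedModType R)
  (le : X -> X -> Prop) (L : Type) (Ss : L -> R -> X -> X) (T : R -> X -> X) :
  banach_lattice le -> order_continuous le ->
  (exists l : L, True) ->
  (forall l, convex_semigroup le (Ss l) /\ monotone_semigroup le (Ss l)) ->
  semigroup T -> upper_bound le Ss T ->
  exists S : R -> X -> X,
    [/\ envelope le Ss S,
        (forall h x, 0 < h -> is_sup le [set Ss l h x | l in [set: L]] (Jh le Ss h x)),
        (forall t x, 0 <= t ->
           is_sup le [set Jpi le Ss ts x | ts in in_Pt t] (S t x)) &
        (C0_semigroup T -> (exists l0, C0_semigroup (Ss l0)) -> C0_semigroup S)].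
Proof.
move=> BL OC L_inhabited Ss_cvx_mono T_sg T_ub.
exists (Senv le Ss); split.
- exact (Senv_envelope BL OC L_inhabited Ss_cvx_mono T_sg T_ub).
- move=> h x; exact (Jh_is_sup BL OC L_inhabited T_ub x).
- move=> t x; exact (Senv_is_sup BL OC L_inhabited Ss_cvx_mono T_sg T_ub x).
- exact (Senv_C0 BL OC L_inhabited Ss_cvx_mono T_sg T_ub).
Qed.
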